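(* Let $n \geq 2$ and $\theta = (\theta_1,\dots,\theta_n) \in \mathbb{T}^n$, and let $r(\theta) = \frac{1}{n}\left|\sum_{j=1}^n e^{\mathrm{i}\theta_j}\right|$ be the magnitude of the order parameter. Then: 1) if $\theta \in \bar\Delta(\gamma)$ for some $\gamma \in [0,\pi]$, then $r(\theta) \in [\cos(\gamma/2), 1]$; 2) if $r(\theta) \in [0,1]$ and $\theta \in \bar\Delta(\pi)$, then $\theta \in \bar\Delta(\gamma)$ for some $\gamma \in [2\arccos(r(\theta)), \pi]$.
   Context: $\mathbb{T}^1 = ]-\pi,\pi]$ with $-\pi$ and $\pi$ identified (the circle), and $\mathbb{T}^n$ its $n$-fold product. For $\theta_1,\theta_2 \in \mathbb{T}^1$, $|\theta_1-\theta_2|$ denotes the geodesic distance on the circle. For $\gamma \in [0,\pi]$, $\Delta(\gamma) \subset \mathbb{T}^n$ is the set of $(\theta_1,\dots,\theta_n)$ for which there exists an arc of length $\gamma$ containing all $\theta_i$ in its interior, and $\bar\Delta(\gamma)$ is the union of the phase-synchronized set $\{\theta : \theta_i=\theta_j \text{ for all } i,j\}$ and the closure of $\Delta(\gamma)$; thus $\theta\in\bar\Delta(\gamma)$ means $\max_{i,j}|\theta_i-\theta_j| \le \gamma$. *)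

From Stdlib Require Import Reals Lra.
Open Scope R_scope.

(* A point of T^n is represented by theta : nat -> R, with coordinates
   theta 0, ..., theta (n-1), each in the fundamental domain ]-PI, PI]. *)
Definition in_torus (n : nat) (theta : nat -> R) : Prop :=
  forall i : nat, (i < n)%nat -> - PI < theta i <= PI.

(* Geodesic distance on the circle, for representatives in ]-PI, PI]. *)
Definition circ_dist (a b : R) : R :=
  Rmin (Rabs (a - b)) (2 * PI - Rabs (a - b)).

Definition order_param (n : nat) (theta : nat -> R) : R :=
  / INR n * sqrt ((sum_f_R0 (fun j => cos (theta j)) (pred n)) ^ 2
                  + (sum_f_R0 (fun j => sin (theta j)) (pred n)) ^ 2).

(* bar Delta(gamma) = sync set  U  closure of Delta(gamma), for gamma in [0,PI]:
   all theta_i lie in some closed arc of length gamma, i.e. within geodesic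
   distance gamma/2 of a common center c. *)
Definition barDelta (n : nat) (gamma : R) (theta : nat -> R) : Prop :=
  exists c : R, - PI < c <= PI /\
    forall i : nat, (i < n)%nat -> circ_dist (theta i) c <= gamma / 2.

(* Part 1: with c the centre of an arc of length gamma containing all phases,
   the resultant sum_j e^{i theta_j} has component sum_j cos (theta_j - c)
   >= n cos (gamma/2) in the direction e^{i c}, so its length is at least that;
   it is at most n by the triangle inequality.  Part 2: the half circle is
   always an admissible arc, and 2 acos r <= PI as soon as r >= 0. *)

From Stdlib Require Import Reals Lra Lia.
Open Scope R_scope.

Definition resultant (f : nat -> R) (m : nat) : R :=
  sqrt ((sum_f_R0 (fun j => cos (f j)) m) ^ 2
        + (sum_f_R0 (fun j => sin (f j)) m) ^ 2).

Lemma order_param_resultant (n : nat) (theta : nat -> R) :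
  order_param n theta = / INR n * resultant theta (pred n).
Proof. reflexivity. Qed.

Lemma unit_proj_le_norm (a b x : R) :
  a * cos x + b * sin x <= sqrt (a ^ 2 + b ^ 2).
Proof.
  pose proof (sqrt_cauchy a b (cos x) (sin x)) as H.
  rewrite (Rplus_comm (cos x)²), sin2_cos2, sqrt_1 in H.
  unfold Rsqr in H. replace (a ^ 2 + b ^ 2) with (a * a + b * b) by ring. lra.
Qed.

Lemma resultant_le (f : nat -> R) (m : nat) : resultant f m <= INR m + 1.
Proof.
  unfold resultant. induction m as [|m IH].
  - simpl. replace (cos (f 0%nat) * (cos (f 0%nat) * 1)
                    + sin (f 0%nat) * (sin (f 0%nat) * 1)) with 1.
    + rewrite sqrt_1; lra.
    + pose proof (sin2_cos2 (f 0%nat)); unfold Rsqr in *; lra.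
  - rewrite !tech5, S_INR.
    set (A := sum_f_R0 (fun j => cos (f j)) m) in *.
    set (B := sum_f_R0 (fun j => sin (f j)) m) in *.
    set (N := sqrt (A ^ 2 + B ^ 2)) in *.
    assert (HN0 : 0 <= N) by apply sqrt_pos.
    assert (HN2 : N * N = A ^ 2 + B ^ 2) by (apply sqrt_sqrt; nra).
    pose proof (sin2_cos2 (f (S m))) as Hunit. unfold Rsqr in Hunit.
    pose proof (unit_proj_le_norm A B (f (S m))) as Hproj. fold N in Hproj.
    apply Rle_trans with (N + 1); [|lra].
    rewrite <- (sqrt_Rsqr (N + 1)) by lra.
    apply sqrt_le_1_alt. unfold Rsqr. nra.
Qed.

Lemma sum_cos_shift (f : nat -> R) (c : R) (m : nat) :
  sum_f_R0 (fun j => cos (f j - c)) m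
  = sum_f_R0 (fun j => cos (f j)) m * cos c
    + sum_f_R0 (fun j => sin (f j)) m * sin c.
Proof.
  rewrite (Rmult_comm _ (cos c)), (Rmult_comm _ (sin c)), !scal_sum, <- sum_plus.
  apply sum_eq. intros. apply cos_minus.
Qed.

Lemma resultant_ge (f : nat -> R) (c k : R) (m : nat) :
  (forall j, (j <= m)%nat -> k <= cos (f j - c)) ->
  (INR m + 1) * k <= resultant f m.
Proof.
  intros Hk.
  apply Rle_trans with (sum_f_R0 (fun j => cos (f j - c)) m).
  - rewrite <- S_INR, Rmult_comm, <- sum_cte. apply sum_Rle. exact Hk.
  - rewrite sum_cos_shift. apply unit_proj_le_norm.
Qed.

Lemma cos_circ_dist (a b : R) : cos (circ_dist a b) = cos (a - b).
Proof.
  assert (Habs : cos (Rabs (a - b)) = cos (a - b)).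
  { unfold Rabs. destruct (Rcase_abs (a - b)); [apply cos_neg | reflexivity]. }
  unfold circ_dist. rewrite <- Habs.
  apply Rmin_case_strong; intros; [reflexivity |].
  rewrite cos_minus, cos_2PI, sin_2PI. ring.
Qed.

Lemma circ_dist_le_PI (a b : R) : circ_dist a b <= PI.
Proof.
  unfold circ_dist. apply Rmin_case_strong; intros; lra.
Qed.

Lemma circ_dist_nonneg (a b : R) :
  - PI < a <= PI -> - PI < b <= PI -> 0 <= circ_dist a b.
Proof.
  intros Ha Hb. unfold circ_dist.
  assert (Rabs (a - b) < 2 * PI) by (apply Rabs_def1; lra).
  pose proof (Rabs_pos (a - b)).
  apply Rmin_glb; lra.
Qed.

Lemma cos_le_cos_of_circ_dist (a b g : R) :
  circ_dist a b <= g / 2 -> 0 <= circ_dist a b -> g <= 2 * PI ->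
  cos (g / 2) <= cos (a - b).
Proof.
  intros Hd Hd0 Hg. rewrite <- cos_circ_dist.
  pose proof (circ_dist_le_PI a b).
  apply cos_decr_1; lra.
Qed.

Lemma acos_le_PI2 (r : R) : 0 <= r <= 1 -> acos r <= PI / 2.
Proof.
  intros Hr. pose proof (acos_bound r). pose proof PI_RGT_0.
  apply cos_decr_0; try lra.
  rewrite cos_PI2, cos_acos; lra.
Qed.

Theorem lemma2p1 (n : nat) (theta : nat -> R) :
  (2 <= n)%nat -> in_torus n theta ->
  (forall gamma : R, 0 <= gamma <= PI -> barDelta n gamma theta ->
     cos (gamma / 2) <= order_param n theta <= 1) /\
  (0 <= order_param n theta <= 1 -> barDelta n PI theta ->
     exists gamma : R, 2 * acos (order_param n theta) <= gamma <= PI /\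
                       barDelta n gamma theta).
Proof.
  intros Hn Htorus. split.
  - intros g Hg [c [Hc Hd]].
    assert (Hsize : INR (pred n) + 1 = INR n) by (rewrite <- S_INR; f_equal; lia).
    assert (Hpos : 0 < INR n) by (apply lt_0_INR; lia).
    assert (Hlow : INR n * cos (g / 2) <= resultant theta (pred n)).
    { rewrite <- Hsize. apply resultant_ge with c. intros j Hj.
      assert (Hj' : (j < n)%nat) by lia.
      apply cos_le_cos_of_circ_dist; [apply Hd; exact Hj'| |lra].
      apply circ_dist_nonneg; [apply Htorus; exact Hj' | exact Hc]. }
    pose proof (resultant_le theta (pred n)) as Hup.
    rewrite order_param_resultant.
    split; apply Rmult_le_reg_l with (INR n); trivial;
      rewrite <- Rmult_assoc, Rinv_r; lra.
  - intros Hr Hhalf. exists PI.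
    pose proof (acos_le_PI2 _ Hr). repeat split; trivial; lra.
Qed.
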